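(* Let $p$ be an odd prime, let $G$ be a quasi-powerful $p$-group and let $H=G^{p}Z(G)$. Then $H$ is strongly powerful, i.e. $[H,H]\le H^{p^{2}}$.
   Context: For an odd prime $p$, a finite $p$-group $G$ is powerful if $[G,G]\le G^{p}$, where $G^{p^k}=\langle g^{p^k}\mid g\in G\rangle$, and $G$ is quasi-powerful if $G/Z(G)$ is powerful. A finite $p$-group $X$ is strongly powerful if $[X,X]\le X^{p^{2}}$. *)

From mathcomp Require Import all_boot all_fingroup all_solvable.
Set Implicit Arguments. Unset Strict Implicit. Unset Printing Implicit Defensive.
Local Open Scope group_scope.

Definition powsub (gT : finGroupType) (G : {set gT}) (n : nat) : {set gT} :=
  <<[set x ^+ n | x in G]>>.

Definition powerful (gT : finGroupType) (p : nat) (G : {set gT}) : Prop :=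
  [~: G, G] \subset powsub G p.

Definition quasi_powerful (gT : finGroupType) (p : nat) (G : {group gT}) : Prop :=
  powerful p (G / 'Z(G)).

Definition strongly_powerful (gT : finGroupType) (p : nat) (X : {set gT}) : Prop :=
  [~: X, X] \subset powsub X (p ^ 2).

From mathcomp Require Import all_boot all_fingroup all_solvable.

Set Implicit Arguments.
Unset Strict Implicit.
Unset Printing Implicit Defensive.

Local Open Scope group_scope.

(* Write A = G^p and D = [G, G]; quasi-powerfulness means D <= A Z(G).  As
   Z(G) is central, [A Z(G), A Z(G)] = [A, A], so it suffices to show
   [A, G] <= D^p and then [A, A] <= D^(p^2).  Both follow from a Nakayama-type
   reduction in the p-group G: to prove N <= M for normal N, M one may work
   modulo [N, G] N^p M, where N becomes central of exponent p and M trivial.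
   There, for x, y in G, [x^p, y] = [x, y]^p [x, y, x]^(p(p-1)/2) = 1 since p
   is odd, which kills [A, G]; in the second step D^p turns out to be central
   of exponent p, so [x^p, v] = [x, v]^p = 1 for v in A. *)

Section Powsub.

Variable gT : finGroupType.
Implicit Types X Y : {set gT}.

Canonical powsub_group X n := Eval hnf in [group of powsub X n].

Lemma mem_powsub X n x : x \in X -> x ^+ n \in powsub X n.
Proof. by move=> Xx; apply: mem_gen; apply: imset_f. Qed.

Lemma powsubS X Y n : X \subset Y -> powsub X n \subset powsub Y n.
Proof. by move=> sXY; rewrite genS ?imsetS. Qed.

Lemma powsub_sub (G : {group gT}) n : powsub G n \subset G.
Proof.
by rewrite gen_subG; apply/subsetP => _ /imsetP[x Gx ->]; rewrite groupX.
Qed.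

Lemma powsub_norms X Y n : X \subset 'N(Y) -> X \subset 'N(powsub Y n).
Proof.
move=> nYX; rewrite norms_gen //; apply/subsetP => g Xg; rewrite inE.
apply/subsetP => _ /imsetP[_ /imsetP[y Yy ->] ->].
by rewrite conjXg; apply: imset_f; rewrite memJ_norm ?(subsetP nYX).
Qed.

Lemma powsub_normal (H G : {group gT}) n : H <| G -> powsub H n <| G.
Proof.
case/andP=> sHG nHG.
by rewrite /normal powsub_norms // (subset_trans (powsub_sub H n)).
Qed.

Lemma expg_powsub1 X n x : powsub X n = 1 -> x \in X -> x ^+ n = 1.
Proof. by move=> XnE Xx; have := mem_powsub n Xx; rewrite XnE => /set1P. Qed.

Lemma morphim_powsub (rT : finGroupType) (D : {group gT})
    (f : {morphism D >-> rT}) X n :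
  X \subset D -> f @* powsub X n = powsub (f @* X) n.
Proof.
move=> sXD; have sXnD : [set x ^+ n | x in X] \subset D.
  by apply/subsetP => _ /imsetP[x Xx ->]; rewrite groupX ?(subsetP sXD).
rewrite /powsub morphim_gen // (morphimEsub f sXnD) (morphimEsub f sXD).
rewrite -!imset_comp.
by congr <<_>>; apply: eq_in_imset => x Xx /=; rewrite morphX ?(subsetP sXD).
Qed.

Lemma quotient_powsub (H : {group gT}) X n :
  X \subset 'N(H) -> powsub X n / H = powsub (X / H) n.
Proof. exact: morphim_powsub. Qed.

End Powsub.

Section Commutators.

Variable gT : finGroupType.
Implicit Types x y z : gT.

Lemma commXg_Rmul x y n :
  commute x [~ [~ x, y], x] -> commute [~ x, y] [~ [~ x, y], x] ->
  [~ x ^+ n, y] = [~ x, y] ^+ n * [~ [~ x, y], x] ^+ 'C(n, 2).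
Proof.
move=> cxt cct; rewrite commgEl conjXg conjg_mulR expMg_Rmul //.
by rewrite -!mulgA mulKg.
Qed.

Lemma commute_expg_of_commgX1 x y n :
  commute x [~ x, y] -> [~ x, y] ^+ n = 1 -> commute (x ^+ n) y.
Proof. by move=> cxc cn; apply/commgP; rewrite commXg // cn. Qed.

Lemma commMg_central x y z :
  commute y z -> commute y [~ x, z] -> [~ x * y, z] = [~ x, z].
Proof.
move=> /commgP/eqP Ryz cyxz.
by rewrite commMgJ Ryz mulg1 /conjg -cyxz mulKg.
Qed.

Lemma commMG_center (G : {group gT}) (A B : {set gT}) :
  A \subset G -> B \subset G -> [~: A * 'Z(G), B] = [~: A, B].
Proof.
move=> sAG sBG; apply/eqP; rewrite eqEsubset andbC commSg ?mulG_subl //=.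
rewrite gen_subG; apply/subsetP => _ /imset2P[_ b /mulsgP[a z Aa Zz ->] Bb ->].
have Gb := subsetP sBG b Bb; have Gab := groupR (subsetP sAG a Aa) Gb.
by rewrite commMg_central ?mem_commg //; apply: esym; apply: (centerC _ Zz).
Qed.

End Commutators.

Lemma prime_dvd_bin2 p : prime p -> odd p -> p %| 'C(p, 2).
Proof.
move=> pr_p odd_p; apply: prime_dvd_bin => //.
by case: p pr_p odd_p (prime_gt1 pr_p) => [|[|[|q]]].
Qed.

Section QuasiPowerfulCommutators.

Variables (gT : finGroupType) (p : nat) (G : {group gT}).
Local Notation A := (powsub G p).
Local Notation D := [~: G, G].
Hypothesis sDAZ : D \subset A * 'Z(G).

Let sAG : A \subset G := powsub_sub G p.
Let sDG : D \subset G := der_sub 1 G.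
Let sDpD : powsub D p \subset D := powsub_sub _ p.

Lemma commg_der_sub : [~: D, G] \subset [~: A, G].
Proof. by rewrite -(commMG_center sAG (subxx G)) commSg. Qed.

Lemma commg_powsub_trivg :
  prime p -> odd p -> [~: [~: A, G], G] = 1 -> powsub [~: A, G] p = 1 ->
  powsub D p = 1 -> [~: A, G] = 1.
Proof.
move=> pr_p odd_p /commG1P cAGG /expg_powsub1 expAG /expg_powsub1 expD.
apply/commG1P; rewrite gen_subG; apply/subsetP => _ /imsetP[x Gx ->].
apply/centP => y Gy; have Dc : [~ x, y] \in D by rewrite mem_commg.
have AGt : [~ [~ x, y], x] \in [~: A, G].
  by rewrite (subsetP commg_der_sub) ?mem_commg.
have ct u : u \in G -> commute u [~ [~ x, y], x].
  by move=> Gu; apply: esym (centsP cAGG _ AGt _ Gu).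
have cxt := ct x Gx; have cct := ct _ (subsetP sDG _ Dc).
apply/commgP; rewrite commXg_Rmul // expD // mul1g.
have [k ->] := dvdnP (prime_dvd_bin2 pr_p odd_p).
by rewrite mulnC expgM expAG // expg1n.
Qed.

Section PowsubPowsub.

Hypotheses (cAAG : [~: [~: A, A], G] = 1) (expAA : powsub [~: A, A] p = 1).
Hypotheses (expD2 : powsub D (p ^ 2) = 1) (sAGDp : [~: A, G] \subset powsub D p).

Lemma commute_expg_powsub a b : a \in A -> b \in A -> commute (a ^+ p) b.
Proof.
move=> Aa Ab; have AAab : [~ a, b] \in [~: A, A] by rewrite mem_commg.
apply: commute_expg_of_commgX1; last exact: expg_powsub1 expAA AAab.
have /commG1P cAAGG := cAAG.
exact: esym (centsP cAAGG _ AAab _ (subsetP sAG _ Aa)).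
Qed.

Lemma powsub_der_cent_der : powsub D p \subset 'C(D).
Proof.
apply: subset_trans (centS sDAZ); rewrite centM subsetI; apply/andP; split.
- rewrite gen_subG; apply/subsetP => _ /imsetP[g Dg ->].
  have [a z Aa Zz ->] := mulsgP (subsetP sDAZ _ Dg).
  have caz : commute a z := centerC (subsetP sAG _ Aa) Zz.
  rewrite expgMn //.
  apply: groupM; apply/centP => b Ab; first exact: commute_expg_powsub.
  exact: esym (commuteX p (centerC (subsetP sAG _ Ab) Zz)).
- apply/centsP => g Dpg z Zz; apply: centerC Zz.
  exact: subsetP (subset_trans sDpD sDG) _ Dpg.
Qed.

Lemma exponent_powsub_der : exponent (powsub D p) %| p.
Proof.
have cDpDp : abelian (powsub D p).
  exact: subset_trans powsub_der_cent_der (centS sDpD).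
rewrite /powsub abelian_exponent_gen; last by rewrite -abelian_gen.
apply/exponentP => _ /imsetP[g Dg ->].
by rewrite -expgM mulnn (expg_powsub1 expD2 Dg).
Qed.

Lemma powsub_der_cent : powsub D p \subset 'C(G).
Proof.
rewrite gen_subG; apply/subsetP => _ /imsetP[g Dg ->]; apply/centP => y Gy.
have Dpc : [~ g, y] \in powsub D p.
  by rewrite (subsetP sAGDp) // (subsetP commg_der_sub) ?mem_commg.
apply: commute_expg_of_commgX1; last exact: (exponentP exponent_powsub_der).
exact: esym (centsP powsub_der_cent_der _ Dpc _ Dg).
Qed.

Lemma commg_powsub_powsub_trivg : [~: A, A] = 1.
Proof.
apply/commG1P; rewrite gen_subG; apply/subsetP => _ /imsetP[x Gx ->].
apply/centP => v Av.
have Dpc : [~ x, v] \in powsub D p by rewrite (subsetP sAGDp) // commGC mem_commg.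
apply: commute_expg_of_commgX1; last exact: (exponentP exponent_powsub_der).
exact: esym (centsP powsub_der_cent _ Dpc _ Gx).
Qed.

End PowsubPowsub.

End QuasiPowerfulCommutators.

Lemma pgroup_normal_sub_gen_trivg (gT : finGroupType) (G N : {group gT})
    (p : nat) :
  p.-group G -> N <| G -> N \subset <<[~: N, G] :|: powsub N p>> -> N :=: 1.
Proof.
move=> pG /andP[sNG nNG] sNgen; have pN := pgroupS sNG pG.
have sNpPhi : powsub N p \subset 'Phi(N).
  by rewrite /powsub -(expn1 p) -(MhoE 1 pN) (Phi_joing pN) joing_subr.
have defN : 'Phi(N) <*> [~: N, G] = N.
  apply/eqP; rewrite eqEsubset join_subG Phi_sub commg_subl nNG /=.
  apply: subset_trans sNgen _; rewrite gen_subG subUset joing_subr.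
  exact: subset_trans sNpPhi (joing_subl _ _).
have := Phi_nongen defN; rewrite genGid => defNG.
apply/eqP; apply: contraT => ntN.
have nNG_G : G \subset 'N_G(N) by rewrite subsetI subxx.
have := nil_comm_properl (pgroup_nil pG) sNG ntN nNG_G.
by rewrite defNG (negbTE (proper_irrefl _)).
Qed.

Lemma pgroup_normal_sub_mod (gT : finGroupType) (G N M : {group gT})
    (p : nat) :
  p.-group G -> N <| G -> M <| G ->
  (forall R : {group gT}, G \subset 'N(R) ->
     [~: N, G] \subset R -> powsub N p \subset R -> M \subset R -> N \subset R) ->
  N \subset M.
Proof.
move=> pG nsNG /andP[sMG nMG] subR; have [sNG nNG] := andP nsNG.
have nMN := subset_trans sNG nMG.
set X := [~: N, G] :|: powsub N p.
have nMX : X \subset 'N(M).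
  by rewrite subUset !(subset_trans _ nMN) ?powsub_sub ?commg_subl.
have sNXM : N \subset <<X>> <*> M.
  have sXY : X \subset <<X>> <*> M.
    exact: subset_trans (subset_gen X) (joing_subl _ _).
  apply: subR; rewrite ?joing_subr //.
  - by rewrite normsY ?norms_gen // normsU ?commg_normr ?powsub_norms.
  - exact: subset_trans (subsetUl _ _) sXY.
  - exact: subset_trans (subsetUr _ _) sXY.
rewrite -quotient_sub1 //; apply/trivgP.
apply: (pgroup_normal_sub_gen_trivg (quotient_pgroup M pG)
                                    (quotient_normal M nsNG)).
rewrite -quotientR // -quotient_powsub ?(subset_trans sNG) //.
rewrite -quotientU -quotient_gen //.
by rewrite -quotientYidr ?quotientS // gen_subG.
Qed.

Section QuasiPowerful.

Variable gT : finGroupType.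
Implicit Types G R : {group gT}.

Lemma quasi_powerful_der_sub p G :
  quasi_powerful p G -> [~: G, G] \subset powsub G p * 'Z(G).
Proof.
have nZG : G \subset 'N('Z(G)) := normal_norm (center_normal G).
have nZA := subset_trans (powsub_sub G p) nZG.
rewrite /quasi_powerful /powerful -quotientR // -quotient_powsub //.
rewrite sub_quotient_pre; last exact: subset_trans (der_sub 1 G) nZG.
by rewrite quotientK // (normC nZA).
Qed.

Lemma quotient_der_sub_powsub_center p G R :
  G \subset 'N(R) -> [~: G, G] \subset powsub G p * 'Z(G) ->
  [~: G / R, G / R] \subset powsub (G / R) p * 'Z(G / R).
Proof.
move=> nRG sDAZ; rewrite -quotientR // -quotient_powsub //.
apply: subset_trans (quotientS R sDAZ) _.
rewrite quotientMl ?(subset_trans (powsub_sub G p)) // mulgS //.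
exact: morphim_center.
Qed.

Lemma commg_powsub_sub_der_powsub p G :
  prime p -> odd p -> p.-group G -> [~: G, G] \subset powsub G p * 'Z(G) ->
  [~: powsub G p, G] \subset powsub [~: G, G] p.
Proof.
move=> pr_p odd_p pG sDAZ; have sAG := powsub_sub G p.
have sNG : [~: powsub G p, G] \subset G.
  by rewrite commg_subr (subset_trans sAG) ?normG.
have nsNG : [~: powsub G p, G] <| G by rewrite /normal sNG commg_normr.
apply: (pgroup_normal_sub_mod pG nsNG (powsub_normal p (der_normal 1 G))).
move=> R nRG sNGR sNpR sDpR.
have nR X : X \subset G -> X \subset 'N(R) := fun sXG => subset_trans sXG nRG.
have nAR := nR _ sAG; have nNR := nR _ sNG; have nDR := nR _ (der_sub 1 G).
rewrite -quotient_sub1 // quotientR // quotient_powsub //; apply/trivgP.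
apply: commg_powsub_trivg => //.
- exact: quotient_der_sub_powsub_center.
- by rewrite -quotient_powsub // -!quotientR // quotientS1.
- by rewrite -quotient_powsub // -quotientR // -quotient_powsub // quotientS1.
- by rewrite -quotientR // -quotient_powsub // quotientS1.
Qed.

Lemma commg_powsub_powsub_sub_der_powsub p G :
  prime p -> odd p -> p.-group G -> [~: G, G] \subset powsub G p * 'Z(G) ->
  [~: powsub G p, powsub G p] \subset powsub [~: G, G] (p ^ 2).
Proof.
move=> pr_p odd_p pG sDAZ; have sAG := powsub_sub G p.
have sAGDp := commg_powsub_sub_der_powsub pr_p odd_p pG sDAZ.
have sNG : [~: powsub G p, powsub G p] \subset G.
  exact: subset_trans (commgSS sAG sAG) (der_sub 1 G).
have nsNG : [~: powsub G p, powsub G p] <| G.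
  by rewrite /normal sNG normsR ?powsub_norms ?normG.
apply: (pgroup_normal_sub_mod pG nsNG (powsub_normal _ (der_normal 1 G))).
move=> R nRG sNGR sNpR sDpR.
have nR X : X \subset G -> X \subset 'N(R) := fun sXG => subset_trans sXG nRG.
have nAR := nR _ sAG; have nNR := nR _ sNG; have nDR := nR _ (der_sub 1 G).
rewrite -quotient_sub1 // quotientR // quotient_powsub //; apply/trivgP.
apply: commg_powsub_powsub_trivg.
- exact: quotient_der_sub_powsub_center.
- by rewrite -quotient_powsub // -!quotientR // quotientS1.
- by rewrite -quotient_powsub // -quotientR // -quotient_powsub // quotientS1.
- by rewrite -quotientR // -quotient_powsub // quotientS1.
- by rewrite -quotient_powsub // -!quotientR // -quotient_powsub // quotientS.
Qed.

End QuasiPowerful.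

Theorem proposition8p3 (gT : finGroupType) (p : nat) (G : {group gT}) :
  prime p -> odd p -> p.-group G -> quasi_powerful p G ->
  strongly_powerful p (powsub G p * 'Z(G)).
Proof.
move=> pr_p odd_p pG /quasi_powerful_der_sub sDAZ.
have sAG := powsub_sub G p.
have sAZG : powsub G p * 'Z(G) \subset G by rewrite mul_subG ?center_sub.
rewrite /strongly_powerful commMG_center // commGC commMG_center //.
apply: subset_trans (powsubS _ sDAZ).
exact: commg_powsub_powsub_sub_der_powsub.
Qed.
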